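(* Fix an association $\kappa$ in which every cell serves at least one UE and every UE is served by at least one cell, a power vector $\bm{p}\in\mathbb{R}^n_{>0}$ and a demand vector $\bm{d}\in\mathbb{R}^m_{>0}$. For a noise power $\sigma^2>0$ and a load vector $\bm{x}\in\mathbb{R}^n_{\ge 0}$, define $\bm{F}(\sigma^2,\bm{x})\in\mathbb{R}^n$ by $$F_i(\sigma^2,\bm{x})=\sum_{j\in\mathcal{J}_i}\frac{d_j}{MB\log_2\!\big(1+\gamma_j(\sigma^2,\bm{x})\big)},\qquad \gamma_j(\sigma^2,\bm{x})=\frac{\sum_{i'\in\mathcal{I}_j}p_{i'}g_{i'j}}{\sum_{k\in\mathcal{I}\setminus\mathcal{I}_j}p_kg_{kj}x_k+\sigma^2}.$$ Then $\bm{F}$ is scalable jointly in $(\sigma^2,\bm{x})$: for every $\sigma^2>0$, every $\bm{x}\in\mathbb{R}^n_{\ge0}$ and every $\alpha>1$, $$\alpha\,F_i(\sigma^2,\bm{x})>F_i(\alpha\sigma^2,\alpha\bm{x})\quad\text{for all } i\in\mathcal{I}.$$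
   Context: Cellular network model. $\mathcal{I}$ is a finite set of $n$ cells and $\mathcal{J}$ a finite set of $m$ user equipments (UEs). An association is a matrix $\kappa\in\{0,1\}^{n\times m}$. It determines $\mathcal{I}_j=\{i:\kappa_{ij}=1\}$, the set of cells serving UE $j$, and $\mathcal{J}_i=\{j:\kappa_{ij}=1\}$, the set of UEs served by cell $i$. $M>0$ is the number of resource units and $B>0$ the bandwidth per resource unit. The channel gains satisfy $g_{ij}>0$. The standing assumption that every cell serves at least one UE makes the load function positive, as the paper requires. *)

From HB Require Import structures.
From mathcomp Require Import all_boot all_order all_algebra.
From mathcomp Require Import all_classical all_reals all_analysis.
Set Implicit Arguments. Unset Strict Implicit. Unset Printing Implicit Defensive.
Import Order.TTheory GRing.Theory Num.Theory.
Local Open Scope ring_scope.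

Definition log2 {R : realType} (y : R) : R := ln y / ln 2.

(* association kappa : cells 'I_n x UEs 'I_m -> bool  (kappa i j = kappa_ij = 1) *)

Definition sinr {R : realType} {n m : nat} (kappa : 'I_n -> 'I_m -> bool)
  (p : 'I_n -> R) (g : 'I_n -> 'I_m -> R) (sigma2 : R) (x : 'I_n -> R) (j : 'I_m) : R :=
  (\sum_(i' < n | kappa i' j) p i' * g i' j) /
  (\sum_(k < n | ~~ kappa k j) p k * g k j * x k + sigma2).

Definition loadF {R : realType} {n m : nat} (kappa : 'I_n -> 'I_m -> bool)
  (M B : R) (p : 'I_n -> R) (g : 'I_n -> 'I_m -> R) (d : 'I_m -> R)
  (sigma2 : R) (x : 'I_n -> R) (i : 'I_n) : R :=
  \sum_(j < m | kappa i j) d j / (M * B * log2 (1 + sinr kappa p g sigma2 x j)).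

(* The only analytic fact needed is that [t |-> t log2 (1 + y / t)] is
   strictly increasing, in the form [ln (1 + a u) < a ln (1 + u)] for [a > 1],
   [u > 0].  Scaling noise and loads by [a] divides every SINR by [a], so each
   per-UE term [d_j / (MB log2 (1 + gamma_j))] grows by strictly less than the
   factor [a]; a cell serves at least one UE, so the sum is strict too. *)
From mathcomp Require Import all_boot all_order all_algebra.
From mathcomp Require Import all_classical all_reals all_analysis.
From mathcomp Require Import ring lra.
Import Order.TTheory GRing.Theory Num.Theory.
Local Open Scope ring_scope.

Section LogInequalities.
Variable R : realType.

Lemma ln_lt_subr1 (z : R) : 0 < z -> z != 1 -> ln z < z - 1.
Proof.
move=> z_gt0 z_neq1.
have lnz_neq0 : ln z != 0 by rewrite ln_eq0.
by have := expR_gt1Dx lnz_neq0; rewrite lnK ?posrE // ltrBrDl.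
Qed.

Lemma ln1D_gt_frac (u : R) : 0 < u -> u / (1 + u) < ln (1 + u).
Proof.
move=> u_gt0.
have Du_gt0 : 0 < 1 + u by rewrite addr_gt0.
have := @ln_lt_subr1 (1 + u)^-1; rewrite lnV ?posrE // invr_gt0 Du_gt0.
have -> : (1 + u)^-1 - 1 = - (u / (1 + u)) by field; rewrite gt_eqF.
rewrite ltrN2; apply=> //.
by rewrite lt_eqF // invf_lt1 // ltrDl.
Qed.

Lemma ln1D_lt_mul (a u : R) : 1 < a -> 0 < u -> ln (1 + a * u) < a * ln (1 + u).
Proof.
move=> a_gt1 u_gt0.
have Du_gt0 : 0 < 1 + u by rewrite addr_gt0.
have Dau_gt0 : 0 < 1 + a * u by rewrite addr_gt0 // mulr_gt0 // (lt_trans ltr01).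
set z := (1 + a * u) / (1 + u).
have split_ln : ln (1 + a * u) = ln z + ln (1 + u).
  by rewrite -lnM ?posrE ?divr_gt0 // divfK // gt_eqF.
(* [z - 1 = (a - 1) u / (1 + u)], which [ln1D_gt_frac] bounds by [(a - 1) ln (1 + u)]. *)
have lnz_le : ln z <= (a - 1) * (u / (1 + u)).
  have -> : z = 1 + (a - 1) * (u / (1 + u)) by rewrite /z; field; rewrite gt_eqF.
  apply: le_ln1Dx; apply: lt_le_trans (ltrN10 R) _.
  by rewrite mulr_ge0 ?subr_ge0 ?ltW // divr_gt0.
have frac_lt : (a - 1) * (u / (1 + u)) < (a - 1) * ln (1 + u).
  by rewrite ltr_pM2l ?subr_gt0 // ln1D_gt_frac.
rewrite split_ln; lra.
Qed.

Lemma log2_1D_lt_mul (a y : R) : 1 < a -> 0 < y -> log2 (1 + y) < a * log2 (1 + y / a).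
Proof.
move=> a_gt1 y_gt0.
have a_gt0 : 0 < a by apply: lt_trans a_gt1.
have ln2_gt0 : 0 < ln (2 : R) by rewrite ln_gt0 // ltr1n.
rewrite /log2 mulrA ltr_pM2r ?invr_gt0 //.
have {1}-> : y = a * (y / a) by rewrite mulrC divfK // gt_eqF.
by rewrite ln1D_lt_mul ?divr_gt0.
Qed.

End LogInequalities.

Section Sinr.
Variables (R : realType) (n m : nat) (kappa : 'I_n -> 'I_m -> bool).
Variables (p : 'I_n -> R) (g : 'I_n -> 'I_m -> R).

Lemma sinr_scale (a sigma2 : R) (x : 'I_n -> R) (j : 'I_m) :
  sinr kappa p g (a * sigma2) (fun k => a * x k) j = sinr kappa p g sigma2 x j / a.
Proof.
rewrite /sinr.
have -> : \sum_(k < n | ~~ kappa k j) p k * g k j * (a * x k)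
        = a * \sum_(k < n | ~~ kappa k j) p k * g k j * x k.
  by rewrite mulr_sumr; apply: eq_bigr => k _; rewrite mulrCA.
by rewrite -mulrDr invfM mulrA mulrAC.
Qed.

Lemma sinr_gt0 (sigma2 : R) (x : 'I_n -> R) (j : 'I_m) :
  (forall i, 0 < p i) -> (forall i, 0 < g i j) -> (exists i, kappa i j) ->
  0 < sigma2 -> (forall k, 0 <= x k) -> 0 < sinr kappa p g sigma2 x j.
Proof.
move=> p_gt0 g_gt0 [i kij] sigma2_gt0 x_ge0.
apply: divr_gt0.
  rewrite (bigD1 i) //= ltr_pwDl ?mulr_gt0 //.
  by apply: sumr_ge0 => k _; rewrite mulr_ge0 ?ltW.
rewrite ltr_wpDl //; apply: sumr_ge0 => k _.
by rewrite mulr_ge0 // mulr_ge0 ?ltW.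
Qed.

End Sinr.

Lemma rate_term_scale (R : realType) (M B c a y : R) :
  0 < M -> 0 < B -> 0 < c -> 1 < a -> 0 < y ->
  c / (M * B * log2 (1 + y / a)) < a * (c / (M * B * log2 (1 + y))).
Proof.
move=> M_gt0 B_gt0 c_gt0 a_gt1 y_gt0.
have a_gt0 : 0 < a by apply: lt_trans a_gt1.
have log2_gt0 (t : R) : 0 < t -> 0 < log2 (1 + t).
  by move=> t_gt0; rewrite divr_gt0 ?ln_gt0 ?ltr1n // ltrDl.
have L_gt0 := log2_gt0 _ y_gt0.
have La_gt0 : 0 < log2 (1 + y / a) by rewrite log2_gt0 ?divr_gt0.
set L := log2 (1 + y) in L_gt0 *; set La := log2 (1 + y / a) in La_gt0 *.
have -> : c / (M * B * La) = a * (c / (M * B * (a * La))).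
  by field; rewrite !gt_eqF.
have MB_gt0 : 0 < M * B by rewrite mulr_gt0.
have aLa_gt0 : 0 < a * La by rewrite mulr_gt0.
rewrite ltr_pM2l // ltr_pM2l // ltf_pV2 ?posrE ?(mulr_gt0 MB_gt0) //.
by rewrite ltr_pM2l // log2_1D_lt_mul.
Qed.

Theorem proposition2 (R : realType) (n m : nat)
  (kappa : 'I_n -> 'I_m -> bool) (M B : R) (g : 'I_n -> 'I_m -> R)
  (p : 'I_n -> R) (d : 'I_m -> R)
  (hM : 0 < M) (hB : 0 < B) (hg : forall i j, 0 < g i j)
  (hcell : forall i : 'I_n, exists j : 'I_m, kappa i j)
  (hue : forall j : 'I_m, exists i : 'I_n, kappa i j)
  (hp : forall i, 0 < p i) (hd : forall j, 0 < d j) :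
  forall (sigma2 : R) (x : 'I_n -> R) (alpha : R),
    0 < sigma2 -> (forall k, 0 <= x k) -> 1 < alpha ->
    forall i : 'I_n,
      loadF kappa M B p g d (alpha * sigma2) (fun k => alpha * x k) i
      < alpha * loadF kappa M B p g d sigma2 x i.
Proof.
move=> sigma2 x alpha sigma2_gt0 x_ge0 alpha_gt1 i.
rewrite /loadF mulr_sumr.
have [j0 kij0] := hcell i.
apply: ltr_sum; first by apply/hasP; exists j0; rewrite ?mem_index_enum.
move=> j _; rewrite sinr_scale.
apply: rate_term_scale => //.
exact: sinr_gt0.
Qed.
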